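(* Let $\beta>0$ and $\varepsilon>0$, and let $q_0,q_1$ be the probability distributions on four outcomes given by $$q_0=\frac1{Z_0}\bigl(e^{2\beta},1,e^{-\beta},e^{-\beta}\bigr),\qquad q_1=\frac1{Z_1}\bigl(e^{2\beta},1,e^{-\beta+2\beta\varepsilon},e^{-\beta-2\beta\varepsilon}\bigr),$$ with $Z_0,Z_1$ the normalizing constants. Then $\mathrm{D}(q_1\|q_0)\le8\beta^2\varepsilon^2e^{-3\beta+2\beta\varepsilon}$. When $\varepsilon\le1/2$, $\mathrm{D}(q_1\|q_0)\le8\beta^2\varepsilon^2e^{-2\beta}$.
   Context: $\mathrm{D}(p\|q)=\sum_jp_j\log(p_j/q_j)$ is the Kullback–Leibler divergence (natural logarithm). These are the diagonal Gibbs distributions at inverse temperature $\beta$ of the two-qubit diagonal Hamiltonians $H_0=\mathrm{diag}(-2,0,1,1)$ and $H_1=\mathrm{diag}(-2,0,1+2\varepsilon,1-2\varepsilon)$. *)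

From Stdlib Require Import Reals Lra.
Open Scope R_scope.

Definition KL4 (p q : nat -> R) : R :=
  sum_f_R0 (fun j => p j * ln (p j / q j)) 3.

Definition w0 (beta : R) (j : nat) : R :=
  match j with
  | 0%nat => exp (2 * beta)
  | 1%nat => 1
  | 2%nat => exp (- beta)
  | _ => exp (- beta)
  end.

Definition w1 (beta eps : R) (j : nat) : R :=
  match j with
  | 0%nat => exp (2 * beta)
  | 1%nat => 1
  | 2%nat => exp (- beta + 2 * beta * eps)
  | _ => exp (- beta - 2 * beta * eps)
  end.

Definition Z0 (beta : R) : R := sum_f_R0 (w0 beta) 3.
Definition Z1 (beta eps : R) : R := sum_f_R0 (w1 beta eps) 3.
Definition q0 (beta : R) (j : nat) : R := w0 beta j / Z0 beta.
Definition q1 (beta eps : R) (j : nat) : R := w1 beta eps j / Z1 beta eps.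

(* The two weight vectors differ only on the two excited levels, where ln(w1/w0) = +-2 beta eps.
   Normalizing, D(q1||q0) = 2 beta eps (q1_2 - q1_3) + ln(Z0/Z1), and ln(Z0/Z1) <= 0 because
   cosh >= 1.  Bounding Z1 below by its ground-state weight e^(2 beta) gives
   q1_2 - q1_3 <= e^(-3 beta + 2 beta eps) (1 - e^(-4 beta eps)) <= e^(-3 beta + 2 beta eps) 4 beta eps. *)

From Stdlib Require Import Reals Lra Psatz.
From Coquelicot Require Import Rcomplements.
Open Scope R_scope.

Lemma exp_le (x y : R) : x <= y -> exp x <= exp y.
Proof.
  intros [Hlt | ->]; [left; exact (exp_increasing _ _ Hlt) | right; reflexivity].
Qed.

Lemma exp_add_exp_opp_ge2 (t : R) : 2 <= exp t + exp (- t).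
Proof. pose proof (exp_ineq1_le t); pose proof (exp_ineq1_le (- t)); lra. Qed.

Lemma sum_normalized_ln_ratio (a b : nat -> R) (n : nat) :
  (forall j, (j <= n)%nat -> 0 < a j) -> (forall j, (j <= n)%nat -> 0 < b j) ->
  let A := sum_f_R0 a n in
  let B := sum_f_R0 b n in
  sum_f_R0 (fun j => a j / A * ln (a j / A / (b j / B))) n
  = sum_f_R0 (fun j => a j * ln (a j / b j)) n / A + ln (B / A).
Proof.
  intros Ha Hb A B.
  assert (HA : 0 < A) by exact (tech1 a n Ha).
  assert (HB : 0 < B) by exact (tech1 b n Hb).
  rewrite (sum_eq _ (fun j => a j * ln (a j / b j) * / A + a j * / A * ln (B / A))).
  - rewrite sum_plus, <- !scal_sum.
    fold A; field; lra.
  - intros j Hj.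
    pose proof (Ha j Hj); pose proof (Hb j Hj).
    replace (a j / A / (b j / B)) with (a j / b j * (B / A)) by (field; lra).
    rewrite ln_mult by (apply Rdiv_lt_0_compat; lra).
    field; lra.
Qed.

Lemma one_sub_exp_opp_bounds (s : R) : 0 <= s -> 0 <= 1 - exp (- s) <= s.
Proof.
  intros Hs.
  pose proof (exp_le (- s) 0 ltac:(lra)); rewrite exp_0 in *.
  pose proof (exp_ineq1_le (- s)); lra.
Qed.

Lemma w0_pos (beta : R) (j : nat) : 0 < w0 beta j.
Proof. destruct j as [|[|[|]]]; simpl; auto using exp_pos, Rlt_0_1. Qed.

Lemma w1_pos (beta eps : R) (j : nat) : 0 < w1 beta eps j.
Proof. destruct j as [|[|[|]]]; simpl; auto using exp_pos, Rlt_0_1. Qed.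

Lemma Z0_le_Z1 (beta eps : R) : Z0 beta <= Z1 beta eps.
Proof.
  unfold Z0, Z1; simpl.
  rewrite exp_plus; unfold Rminus; rewrite exp_plus.
  pose proof (exp_add_exp_opp_ge2 (2 * beta * eps)).
  pose proof (exp_pos (- beta)).
  nra.
Qed.

Lemma exp_le_Z1 (beta eps : R) : exp (2 * beta) <= Z1 beta eps.
Proof.
  unfold Z1; simpl.
  pose proof (w1_pos beta eps 2); pose proof (w1_pos beta eps 3); simpl in *; lra.
Qed.

Lemma ln_Z0_div_Z1_nonpos (beta eps : R) : ln (Z0 beta / Z1 beta eps) <= 0.
Proof.
  assert (HZ0 : 0 < Z0 beta) by (apply tech1; intros; apply w0_pos).
  pose proof (Z0_le_Z1 beta eps) as Hle.
  rewrite ln_div by lra.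
  pose proof (ln_le _ _ HZ0 Hle); lra.
Qed.

Lemma KL4_q1_q0_eq (beta eps : R) :
  KL4 (q1 beta eps) (q0 beta)
  = 2 * beta * eps * (exp (- beta + 2 * beta * eps) - exp (- beta - 2 * beta * eps))
      / Z1 beta eps
    + ln (Z0 beta / Z1 beta eps).
Proof.
  unfold KL4, q1, q0, Z1, Z0.
  rewrite sum_normalized_ln_ratio by (intros; apply w1_pos || apply w0_pos).
  f_equal; f_equal; simpl.
  rewrite !ln_div, !ln_exp, ln_1 by (exact Rlt_0_1 || apply exp_pos).
  ring.
Qed.

Lemma KL4_q1_q0_le (beta eps : R) : 0 <= beta * eps ->
  KL4 (q1 beta eps) (q0 beta)
    <= 8 * beta ^ 2 * eps ^ 2 * exp (- 3 * beta + 2 * beta * eps).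
Proof.
  intros Hbe.
  rewrite KL4_q1_q0_eq.
  set (t := 2 * beta * eps).
  set (E := exp (- 3 * beta + t)).
  assert (Ht : 0 <= t) by (unfold t; lra).
  assert (HE : 0 < E) by apply exp_pos.
  assert (HZ1 : 0 < Z1 beta eps)
    by (pose proof (exp_pos (2 * beta)); pose proof (exp_le_Z1 beta eps); lra).
  assert (Hplus : exp (- beta + t) = exp (2 * beta) * E)
    by (unfold E; rewrite <- exp_plus; f_equal; ring).
  assert (Hminus : exp (- beta - t) = exp (2 * beta) * E * exp (- (2 * t)))
    by (unfold E; rewrite <- !exp_plus; f_equal; ring).
  assert (Hratio : 0 < exp (2 * beta) / Z1 beta eps <= 1).
  { split; [apply Rdiv_lt_0_compat | rewrite <- Rdiv_le_1];
      auto using exp_pos, exp_le_Z1. }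
  rewrite Hplus, Hminus.
  replace (t * (exp (2 * beta) * E - exp (2 * beta) * E * exp (- (2 * t))) / Z1 beta eps)
    with (exp (2 * beta) / Z1 beta eps * (t * E * (1 - exp (- (2 * t)))))
    by (field; lra).
  replace (8 * beta ^ 2 * eps ^ 2) with (2 * t ^ 2) by (unfold t; ring).
  pose proof (one_sub_exp_opp_bounds (2 * t) ltac:(lra)) as Hdecay.
  pose proof (ln_Z0_div_Z1_nonpos beta eps).
  assert (HtE : 0 <= t * E) by (apply Rmult_le_pos; lra).
  assert (Hgain_le : t * E * (1 - exp (- (2 * t))) <= t * E * (2 * t))
    by (apply Rmult_le_compat_l; lra).
  assert (Hgain : 0 <= t * E * (1 - exp (- (2 * t)))) by (apply Rmult_le_pos; lra).
  nra.
Qed.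

Theorem lemma5p1 (beta eps : R) (hbeta : 0 < beta) (heps : 0 < eps) :
  KL4 (q1 beta eps) (q0 beta)
    <= 8 * beta ^ 2 * eps ^ 2 * exp (- 3 * beta + 2 * beta * eps)
  /\ (eps <= 1 / 2 ->
      KL4 (q1 beta eps) (q0 beta) <= 8 * beta ^ 2 * eps ^ 2 * exp (- 2 * beta)).
Proof.
  assert (Hbound := KL4_q1_q0_le beta eps ltac:(nra)).
  split; [exact Hbound |].
  intros Heps.
  apply (Rle_trans _ _ _ Hbound), Rmult_le_compat_l; [nra |].
  apply exp_le; nra.
Qed.
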